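(* Let $r,n\ge 1$ be integers and let $\Gamma=W(\mathcal K_r)\cong(\mathbb Z/2\mathbb Z)^r$, where $\mathcal K_r$ is the complete graph on $r$ vertices. Then \[ h_n(\Gamma)\le 4^{rn}\cdot n^r\cdot n^{(1-2^{-r})n}. \]
   Context: $W(\mathcal G)$ denotes the right-angled Coxeter group of a graph $\mathcal G$: generators $\sigma_v$ for the vertices, relations $\sigma_v^2=1$, and $\sigma_v\sigma_w=\sigma_w\sigma_v$ for adjacent $v,w$. For a group $\Gamma$, $h_n(\Gamma)=|\mathrm{Hom}(\Gamma,\mathrm{Sym}_n)|$ is the number of homomorphisms from $\Gamma$ to the symmetric group on $\{1,\dots,n\}$. *)

From mathcomp Require Import all_boot all_fingroup.
Set Implicit Arguments. Unset Strict Implicit. Unset Printing Implicit Defensive.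

(* The right-angled Coxeter group W(G) is
   presented by generators sigma_v (v in V) with sigma_v^2 = 1 and
   sigma_v sigma_w = sigma_w sigma_v for adjacent v, w.  By the universal
   property of a presentation, Hom(W(G), Sym_n) is in bijection with the
   assignments v |-> (image of sigma_v) in Sym_n satisfying the relations. *)
Definition RACG_homs (V : finType) (adj : rel V) (n : nat)
  : {set {ffun V -> {perm 'I_n}}} :=
  [set f : {ffun V -> {perm 'I_n}} |
     [forall v, (f v * f v == 1)%g] &&
     [forall v, forall w, adj v w ==> (f v * f w == f w * f v)%g]].

Definition h_RACG (V : finType) (adj : rel V) (n : nat) : nat :=
  #|RACG_homs adj n|.

Definition complete_adj (r : nat) : rel 'I_r := fun v w => v != w.

From mathcomp Require Import all_boot all_fingroup.
From mathcomp Require Import zify.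
Set Implicit Arguments. Unset Strict Implicit. Unset Printing Implicit Defensive.

(* A homomorphism W(K_r) -> Sym_n is an r-tuple F of commuting involutions of
   T = {0, ..., n-1}.  Fix a representative y of every orbit and a set J(y) of
   generators such that C |-> F_C y maps the subsets of J(y) bijectively onto
   the orbit; each point x then has coordinates c(x) in J(y).  The action is
   determined by the map x |-> (rep x, label x), where the label records c(x)
   and, at each point F_i y with i in J(y), the generators v such that
   i is in c(F_v y): these data give the translation of the coordinates by every
   F_v.  Representatives carry the empty label, every other point one of at
   most n (3^r - 1) codes, and at least n / 2^r points are representatives, as
   orbits have at most 2^r points.  Hence
   h_n <= 2^n (n (3^r - 1))^(n - n / 2^r) <= 4^(rn) n^((1 - 2^-r) n). *)

Definition ceil_div m d := (m + d.-1) %/ d.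

Lemma ceil_div_le m d s : 0 < d -> m <= s * d -> ceil_div m d <= s.
Proof. by move=> d0 msd; rewrite -ltnS ltn_divLR //; lia. Qed.

Lemma leq_ceil_div m d : 0 < d -> m <= ceil_div m d * d.
Proof. by move=> d0; have := ltn_ceil (m + d.-1) d0; rewrite /ceil_div; lia. Qed.

Lemma pred_exp3_gt0 k : 0 < k -> 0 < (3 ^ k).-1.
Proof. by move=> k0; have := leq_pexp2l (isT : 0 < 3) k0; lia. Qed.

Lemma leq_pred_exp3_exp4 k : 2 * (3 ^ k).-1 <= 4 ^ k.
Proof.
elim: k => // -[//|k] IHk; rewrite !(expnS _ k.+1).
have : 1 <= 3 ^ k.+1 by rewrite expn_gt0.
have : 4 ^ 1 <= 4 ^ k.+1 by rewrite leq_pexp2l.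
lia.
Qed.

Lemma leq_exp2_pred_exp3 k N e : 0 < k -> e <= N ->
  2 ^ N * (3 ^ k).-1 ^ e <= 4 ^ (k * N).
Proof.
move=> k0 eN; have le_e := leq_pexp2l (pred_exp3_gt0 k0) eN.
apply: leq_trans (leq_mul (leqnn _) le_e) _; rewrite -expnMn expnM.
by case: N {eN le_e} => // N; rewrite leq_exp2r ?leq_pred_exp3_exp4.
Qed.

Lemma leq_card_bigcup (I T : finType) (P : pred I) (A : I -> {set T}) :
  #|\bigcup_(i | P i) A i| <= \sum_(i | P i) #|A i|.
Proof.
elim/big_rec2: _ => [|i U k _ IH]; first by rewrite cards0.
by apply: leq_trans (leq_card_setU _ _) _; rewrite leq_add2l.
Qed.

Definition symdiff (T : finType) (A B : {set T}) : {set T} :=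
  [set x | (x \in A) (+) (x \in B)].

Section SymmetricDifference.
Variable T : finType.
Implicit Types A B C : {set T}.

Lemma symdiff_sub A B C : A \subset C -> B \subset C -> symdiff A B \subset C.
Proof.
move=> /subsetP sAC /subsetP sBC; apply/subsetP => x; rewrite inE.
by case: (boolP (x \in A)) => [/sAC | _ /sBC].
Qed.

Lemma symdiff_eq0 A B : symdiff A B = set0 -> A = B.
Proof.
move/setP=> AB0; apply/setP => x; move: (AB0 x); rewrite !inE.
by case: (x \in A); case: (x \in B).
Qed.

Lemma symdiffxx A : symdiff A A = set0.
Proof. by apply/setP => x; rewrite !inE addbb. Qed.

Lemma symdiff1_in x A : x \in A -> symdiff [set x] A = A :\ x.
Proof.
by move=> xA; apply/setP => y; rewrite !inE; case: eqP => [->|]; rewrite ?xA.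
Qed.

Lemma symdiff1_notin x A : x \notin A -> symdiff [set x] A = x |: A.
Proof.
move=> xA; apply/setP => y; rewrite !inE.
by case: eqP => [->|]; rewrite ?(negbTE xA).
Qed.

End SymmetricDifference.

Section Codes.
Variables I T : finType.
Local Notation code_t := {ffun T -> T * {ffun I -> option bool}}.
Implicit Types (phi : code_t) (S : {set T}).

Definition code_coord phi x := [set v | (phi x).2 v == Some true].

Definition code_shift phi y v := [set i | [exists z,
  [&& (phi z).1 == y, code_coord phi z == [set i] & (phi z).2 v != None]]].

Definition decode phi v x := odflt x [pick z | ((phi z).1 == (phi x).1) &&
  (code_coord phi z == symdiff (code_coord phi x) (code_shift phi (phi x).1 v))].

Definition code_fam S x : pred (T * {ffun I -> option bool}) :=
  if x \in S then pred1 (x, [ffun => None]) else [pred t | t.2 != [ffun => None]].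

Definition codes_for S : {set code_t} := [set phi | phi \in family (code_fam S)].

Definition codes : {set code_t} :=
  \bigcup_(S : {set T} | #|T| <= #|S| * 2 ^ #|I|) codes_for S.

Lemma card_code_fam S x : x \notin S -> #|code_fam S x| = #|T| * (3 ^ #|I|).-1.
Proof.
move=> xS; rewrite /code_fam (negbTE xS).
rewrite (@eq_card _ _ (setX [set: T] [set~ [ffun => None]])); last first.
  by case=> a b; rewrite !inE.
by rewrite cardsX cardsT cardsC1 card_ffun card_option card_bool.
Qed.

Lemma card_codes_for S : #|codes_for S| = (#|T| * (3 ^ #|I|).-1) ^ (#|T| - #|S|).
Proof.
rewrite cardsE card_family foldrE big_image /= (bigID (mem S)) /=.
rewrite (eq_bigr (fun _ => 1)) => [|x xS]; last by rewrite /code_fam xS card1.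
rewrite prod_nat_const exp1n mul1n (eq_bigr _ (fun x => @card_code_fam S x)).
rewrite prod_nat_const -(cardsC S) addKn; congr (_ ^ _).
by apply: eq_card => x; rewrite !inE.
Qed.

Lemma card_codes : 0 < #|I| -> 0 < #|T| ->
  #|codes| <=
    2 ^ #|T| * (#|T| * (3 ^ #|I|).-1) ^ (#|T| - ceil_div #|T| (2 ^ #|I|)).
Proof.
move=> I0 T0; apply: leq_trans (leq_card_bigcup _ _) _.
have le_codes_for (S : {set T}) : #|T| <= #|S| * 2 ^ #|I| -> #|codes_for S| <=
    (#|T| * (3 ^ #|I|).-1) ^ (#|T| - ceil_div #|T| (2 ^ #|I|)).
  move=> TS; rewrite card_codes_for; apply: leq_pexp2l.
    by rewrite muln_gt0 T0 pred_exp3_gt0.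
  by apply/leq_sub2l/ceil_div_le; rewrite ?expn_gt0.
apply: leq_trans (@leq_sum _ _ _ _ _ le_codes_for) _.
rewrite big_const iter_addn_0 mulnC leq_mul2r (leq_trans (max_card _)) ?orbT //.
by rewrite -cardsT -powersetT card_powerset cardsT.
Qed.

End Codes.

Section CommutingInvolutions.
Variables (I T : finType) (F : I -> T -> T).
Hypothesis FK : forall i, involutive (F i).
Hypothesis FC : forall i j x, F i (F j x) = F j (F i x).
Implicit Types (C D J : {set I}) (x y z : T).

Definition actw (s : seq I) x := foldr F x s.

Definition act (C : {set I}) x := actw (enum C) x.

Lemma actwF s i x : actw s (F i x) = F i (actw s x).
Proof. by elim: s => //= j s ->; rewrite FC. Qed.

Lemma actw_rem s i x : i \in s -> actw s x = F i (actw (rem i s) x).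
Proof.
elim: s => //= j s IHs; rewrite inE; case: eqVneq => [->|ji] //= si.
by rewrite IHs // FC.
Qed.

Lemma actw_perm s t x : perm_eq s t -> actw s x = actw t x.
Proof.
elim: s t => [|i s IHs] t /=; first by move/perm_size; case: t.
move=> st; have ti : i \in t by rewrite -(perm_mem st) mem_head.
rewrite (actw_rem x ti) (IHs (rem i t)) //.
by rewrite -(perm_cons i); apply: perm_trans st (perm_to_rem ti).
Qed.

Lemma actF C i x : act C (F i x) = F i (act C x).
Proof. exact: actwF. Qed.

Lemma act0 x : act set0 x = x.
Proof. by rewrite /act enum_set0. Qed.

Lemma act1 i x : act [set i] x = F i x.
Proof. by rewrite /act enum_set1. Qed.

Lemma act_setU1 i C x : i \notin C -> act (i |: C) x = F i (act C x).
Proof.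
move=> iC; rewrite /act (@actw_perm _ (i :: enum C)) //.
apply: uniq_perm; rewrite ?enum_uniq //= ?mem_enum ?iC ?enum_uniq //.
by move=> j; rewrite inE !mem_enum !inE.
Qed.

Lemma F_act i C x : F i (act C x) = act (symdiff [set i] C) x.
Proof.
case: (boolP (i \in C)) => iC; last by rewrite symdiff1_notin // act_setU1.
by rewrite symdiff1_in // -{1}(setD1K iC) act_setU1 ?setD11 // FK.
Qed.

Lemma actw_odd s x : actw s x = act [set i | odd (count_mem i s)] x.
Proof.
elim: s => [|i s IHs] /=.
  by rewrite -{1}[x]act0; congr act; apply/setP => j; rewrite !inE.
rewrite IHs F_act; congr act; apply/setP => j.
by rewrite !inE oddD eq_sym; case: (i == j).
Qed.

Lemma act_symdiff C D x : act C (act D x) = act (symdiff C D) x.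
Proof.
rewrite /act /actw -foldr_cat -/(actw _ x) actw_odd; congr act.
apply/setP => i; rewrite !inE count_cat !count_uniq_mem ?enum_uniq //.
by rewrite !mem_enum; case: (i \in C); case: (i \in D).
Qed.

Lemma actK C : involutive (act C).
Proof. by move=> x; rewrite act_symdiff symdiffxx act0. Qed.

Definition orbitF x := [set act C x | C : {set I}].

Lemma orbitF_refl x : x \in orbitF x.
Proof. by apply/imsetP; exists set0; rewrite ?act0. Qed.

Lemma orbitF_act C x : orbitF (act C x) = orbitF x.
Proof.
apply/setP => z; apply/imsetP/imsetP => [[D _ ->]|[D _ ->]].
  by exists (symdiff D C); rewrite ?act_symdiff.
by exists (symdiff D C); rewrite // -act_symdiff actK.
Qed.

Definition rep x := odflt x [pick z in orbitF x].

Lemma rep_orbit x : rep x \in orbitF x.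
Proof. by rewrite /rep; case: pickP => [//|/(_ x)]; rewrite orbitF_refl. Qed.

Lemma rep_act C x : rep (act C x) = rep x.
Proof.
rewrite /rep orbitF_act; case: pickP => //= /(_ x).
by rewrite orbitF_refl.
Qed.

Lemma rep_F i x : rep (F i x) = rep x.
Proof. by rewrite -act1 rep_act. Qed.

Lemma act_rep x : exists C, act C (rep x) = x.
Proof.
have /imsetP[C _ ->] := rep_orbit x.
by exists C; rewrite actK.
Qed.

Lemma rep_idem x : rep (rep x) = rep x.
Proof. by have /imsetP[C _ eC] := rep_orbit x; rewrite {1}eC rep_act. Qed.

Definition free y J := [forall C in powerset J, (act C y == y) ==> (C == set0)].

Definition span y J := [set act C y | C in powerset J].

Lemma freeP y J :
  reflect (forall C, C \subset J -> act C y = y -> C = set0) (free y J).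
Proof.
apply: (iffP forall_inP) => fJ C.
  by move=> sCJ Cy; apply/eqP; move: (fJ C); rewrite powersetE sCJ Cy eqxx; apply.
by rewrite powersetE => sCJ; apply/implyP => /eqP Cy; rewrite (fJ C sCJ Cy).
Qed.

Lemma free_inj y J C D :
  free y J -> C \subset J -> D \subset J -> act C y = act D y -> C = D.
Proof.
move=> /freeP fJ sCJ sDJ CD; apply/symdiff_eq0/fJ; first exact: symdiff_sub.
by rewrite -act_symdiff -CD actK.
Qed.

Lemma free_setU1 y J i : free y J -> F i y \notin span y J -> free y (i |: J).
Proof.
move=> /freeP fJ iJ; apply/freeP => C sCiJ Cy; case: (boolP (i \in C)) => iC.
  rewrite -(setD1K iC) act_setU1 ?setD11 // in Cy.
  case/negP: iJ; apply/imsetP; exists (C :\ i); first by rewrite powersetE subDset.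
  by rewrite -{1}Cy FK.
apply: fJ Cy; apply/subsetP => j jC; move/subsetP: sCiJ => /(_ j jC).
by rewrite !inE; case/predU1P => // ji; rewrite -ji jC in iC.
Qed.

Lemma span_closed y J :
  (forall i, F i y \in span y J) -> orbitF y \subset span y J.
Proof.
move=> FJ; apply/subsetP => _ /imsetP[C _ ->]; rewrite /act.
elim: (enum C) => [|i s /imsetP[D]].
  by apply/imsetP; exists set0; rewrite ?powersetE ?sub0set ?act0.
rewrite powersetE /= => sDJ ->; have /imsetP[E] := FJ i.
rewrite powersetE => sEJ Ey; apply/imsetP; exists (symdiff D E).
  by rewrite powersetE symdiff_sub.
by rewrite -act_symdiff -Ey actF.
Qed.

Definition basis y := odflt set0 [pick J | maxset (free y) J].

Lemma basis_max y : maxset (free y) (basis y).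
Proof.
rewrite /basis; case: pickP => // noJ.
have free0 : free y set0 by apply/freeP => C; rewrite subset0 => /eqP.
by have [J maxJ _] := maxset_exists free0; rewrite noJ in maxJ.
Qed.

Lemma basis_free y : free y (basis y).
Proof. exact: maxsetp (basis_max y). Qed.

Lemma basis_span y : orbitF y \subset span y (basis y).
Proof.
apply: span_closed => i; apply: contraT => iB.
have := maxsetsup (basis_max y) (free_setU1 (basis_free y) iB) (subsetUr _ _).
move=> eB; case/negP: iB; apply/imsetP; exists [set i]; last by rewrite act1.
by rewrite powersetE sub1set -eB setU11.
Qed.

Definition coord x :=
  odflt set0 [pick C : {set I} | (C \subset basis (rep x)) && (act C (rep x) == x)].

Lemma coordP x : coord x \subset basis (rep x) /\ act (coord x) (rep x) = x.
Proof.
rewrite /coord; case: pickP => [C /andP[-> /eqP ->] // | noC].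
have [C Cx] := act_rep x.
have /imsetP[D] : x \in span (rep x) (basis (rep x)).
  by apply/(subsetP (basis_span _))/imsetP; exists C.
by rewrite powersetE => sDB Dx; move: (noC D); rewrite sDB -Dx eqxx.
Qed.

Lemma coord_unique x C :
  C \subset basis (rep x) -> act C (rep x) = x -> coord x = C.
Proof.
have [sB Bx] := coordP x => sCB Cx.
by apply: free_inj (basis_free _) sB sCB _; rewrite Bx Cx.
Qed.

Lemma rep_coord_inj x z : rep x = rep z -> coord x = coord z -> x = z.
Proof.
have [_ Cx] := coordP x; have [_ Cz] := coordP z.
by move=> rxz cxz; rewrite -Cx -Cz rxz cxz.
Qed.

Lemma coord_eq0 x : (coord x == set0) = (rep x == x).
Proof.
have [_ Cx] := coordP x; apply/eqP/eqP => [C0 | xx]; first by rewrite -{2}Cx C0 act0.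
by apply: coord_unique; rewrite ?sub0set ?act0.
Qed.

Lemma coord_F v x : coord (F v x) = symdiff (coord x) (coord (F v (rep x))).
Proof.
have [sB Cx] := coordP x; have [sBv Cv] := coordP (F v (rep x)).
rewrite rep_F rep_idem in sBv Cv.
by apply: coord_unique; rewrite rep_F ?symdiff_sub // -act_symdiff Cv actF Cx.
Qed.

Lemma coord_basis y i : rep y = y -> i \in basis y -> coord (F i y) = [set i].
Proof.
by move=> yy iB; apply: coord_unique; rewrite rep_F yy ?sub1set ?act1.
Qed.

Definition label x : {ffun I -> option bool} := [ffun v =>
  if v \in coord x then Some true
  else if [exists i, (coord x == [set i]) && (i \in coord (F v (rep x)))]
  then Some false else None].

Definition code : {ffun T -> T * {ffun I -> option bool}} :=
  [ffun x => (rep x, label x)].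

Lemma code_coordE x : code_coord code x = coord x.
Proof. by apply/setP => v; rewrite !inE !ffunE /=; case: ifP => // _; case: ifP. Qed.

Lemma code_shiftE y v : rep y = y -> code_shift code y v = coord (F v y).
Proof.
move=> yy; apply/setP => i; rewrite inE; apply/existsP/idP.
  case=> z /and3P[]; rewrite code_coordE !ffunE /= => /eqP rz /eqP cz.
  rewrite cz rz; case: ifP => [/set1P -> _ | _].
    have [sB _] := coordP z; rewrite cz rz sub1set in sB.
    by rewrite coord_basis // set11.
  by case: existsP => // -[j /andP[/eqP/set1_inj ->]].
move=> iv; have [sB _] := coordP (F v y); rewrite rep_F yy in sB.
have iB := subsetP sB i iv.
exists (F i y); rewrite code_coordE coord_basis // !ffunE /= rep_F yy !eqxx /=.
rewrite coord_basis //; case: ifP => // _.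
by case: existsP => // -[]; exists i; rewrite eqxx iv.
Qed.

Lemma decode_code v x : decode code v x = F v x.
Proof.
have codeE z : ((code z).1 == (code x).1) &&
    (code_coord code z == symdiff (code_coord code x) (code_shift code (code x).1 v))
  = (rep z == rep x) && (coord z == coord (F v x)).
  by rewrite !ffunE /= !code_coordE code_shiftE ?rep_idem // -coord_F.
rewrite /decode (eq_pick codeE).
case: pickP => [z /andP[/eqP rz /eqP cz] | /(_ (F v x))].
  by apply: rep_coord_inj; rewrite // rep_F.
by rewrite rep_F !eqxx.
Qed.

Lemma card_reps : #|T| <= #|[set x | rep x == x]| * 2 ^ #|I|.
Proof.
have inj : injective (fun x => (rep x, coord x)).
  by move=> x z [rxz cxz]; apply: rep_coord_inj.
rewrite -[#|I|]cardsT -card_powerset -cardsX -[#|T|](card_imset _ inj).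
apply: subset_leq_card; apply/subsetP.
by move=> _ /imsetP[x _ ->]; rewrite !inE rep_idem eqxx subsetT.
Qed.

Lemma code_in_codes : code \in codes I T.
Proof.
apply/bigcupP; exists [set x | rep x == x]; first exact: card_reps.
rewrite inE; apply/familyP => x; rewrite /code_fam ffunE !inE -coord_eq0.
case: (eqVneq (coord x) set0) => [c0 | /set0Pn[v vx]] /=.
  have /eqP xx : rep x == x by rewrite -coord_eq0 c0.
  rewrite inE xx; apply/eqP; congr pair; apply/ffunP => v; rewrite !ffunE c0 inE.
  by case: existsP => // -[i /andP[/eqP/setP/(_ i)]]; rewrite !inE eqxx.
by rewrite inE /=; apply/eqP => /ffunP/(_ v); rewrite !ffunE vx.
Qed.

End CommutingInvolutions.

Definition commuting_involutions (I T : finType) : {set {ffun I -> {perm T}}} :=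
  [set f : {ffun I -> {perm T}} |
    [forall i, f i * f i == 1] && [forall i, forall j, f i * f j == f j * f i]]%g.

Lemma commuting_involutionsP (I T : finType) (f : {ffun I -> {perm T}}) :
    f \in commuting_involutions I T ->
  (forall i, involutive (f i)) /\ (forall i j x, f i (f j x) = f j (f i x)).
Proof.
rewrite inE => /andP[/forallP fK /forallP fC]; split => [i x | i j x].
  by rewrite -permM (eqP (fK i)) perm1.
by rewrite -!permM (eqP (forallP (fC i) j)).
Qed.

Lemma card_commuting_involutions_le_codes (I T : finType) :
  #|commuting_involutions I T| <= #|codes I T|.
Proof.
pose code_of (f : {ffun I -> {perm T}}) := code (fun i => fun_of_perm (f i)).
have codeK f v x : f \in commuting_involutions I T -> decode (code_of f) v x = f v x.
  by case/commuting_involutionsP => fK fC; apply: decode_code.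
have inj : {in commuting_involutions I T &, injective code_of}.
  move=> f g fCI gCI fg; apply/ffunP => v; apply/permP => x.
  by rewrite -(codeK f v x fCI) fg codeK.
rewrite -(card_in_imset inj); apply/subset_leq_card/subsetP.
by move=> _ /imsetP[f /commuting_involutionsP[fK fC] ->]; apply: code_in_codes.
Qed.

Lemma card_commuting_involutions (I T : finType) : 0 < #|I| -> 0 < #|T| ->
  #|commuting_involutions I T| <=
    4 ^ (#|I| * #|T|) * #|T| ^ (#|T| - ceil_div #|T| (2 ^ #|I|)).
Proof.
move=> I0 T0; apply: leq_trans (card_commuting_involutions_le_codes I T) _.
apply: leq_trans (card_codes I0 T0) _.
by rewrite expnMn mulnCA mulnC leq_mul2r leq_exp2_pred_exp3 ?leq_subr ?orbT.
Qed.

Lemma RACG_homs_complete_sub r n :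
  RACG_homs (@complete_adj r) n \subset commuting_involutions 'I_r 'I_n.
Proof.
apply/subsetP => f; rewrite !inE => /andP[-> /forallP fC] /=.
apply/forallP => i; apply/forallP => j; case: (eqVneq i j) => [-> // | ij].
by apply: (implyP (forallP (fC i) j)).
Qed.

Lemma h_RACG_complete_le r n : 0 < r -> 0 < n ->
  h_RACG (@complete_adj r) n <= 4 ^ (r * n) * n ^ (n - ceil_div n (2 ^ r)).
Proof.
move=> r0 n0; apply: leq_trans (subset_leq_card (RACG_homs_complete_sub r n)) _.
by have := @card_commuting_involutions 'I_r 'I_n; rewrite !card_ord; apply.
Qed.

Lemma expn_pow m k : m ^ k = Nat.pow m k.
Proof. by elim: k => // k IHk; rewrite expnS IHk. Qed.

(* Imported only here: Stdlib's Reals rebinds [^] on nat to [Nat.pow]. *)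
From Stdlib Require Import Reals Lra.

Lemma pow_le_Rpower n k s : (0 < n)%N -> (n <= s * 2 ^ k)%N -> (s <= n)%N ->
  (INR (n ^ (n - s)) <= Rpower (INR n) ((1 - / 2 ^ k) * INR n))%R.
Proof.
move=> n0 nsk sn.
have n1 : (1 <= INR n)%R by apply: (le_INR 1); apply/leP.
have k0 : (0 < 2 ^ k)%R by apply: pow_lt; lra.
have nsk' : (INR n <= INR s * 2 ^ k)%R.
  by rewrite -(pow_INR 2) -mult_INR; apply/le_INR/leP.
rewrite pow_INR -Rpower_pow; last lra.
apply: Rle_Rpower => //; rewrite minus_INR; last exact/leP.
have : (INR n * / 2 ^ k <= INR s)%R.
  by apply: (Rmult_le_reg_r (2 ^ k)) => //; rewrite Rmult_assoc Rinv_l; lra.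
lra.
Qed.

Theorem proposition3p3 (r n : nat) (hr : (1 <= r)%N) (hn : (1 <= n)%N) :
  (INR (h_RACG (@complete_adj r) n)
   <= INR (4 ^ (r * n)) * INR (n ^ r)
      * Rpower (INR n) ((1 - / (2 ^ r)) * INR n))%R.
Proof.
have h_le := h_RACG_complete_le hr hn.
set s := ceil_div n _ in h_le.
have s_ge : (n <= s * 2 ^ r)%N by rewrite -expn_pow leq_ceil_div ?expn_gt0.
have s_le : (s <= n)%N by apply: ceil_div_le; rewrite ?leq_pmulr ?expn_gt0.
rewrite !expn_pow in h_le.
apply: Rle_trans (le_INR _ _ (leP h_le)) _; rewrite mult_INR Rmult_assoc.
apply: Rmult_le_compat_l; first exact: pos_INR.
have nr1 : (1 <= INR (n ^ r))%R.
  by rewrite pow_INR; apply: pow_R1_Rle; apply: (le_INR 1); apply/leP.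
have P0 : (0 < Rpower (INR n) ((1 - / 2 ^ r) * INR n))%R by apply: exp_pos.
have := pow_le_Rpower hn s_ge s_le; nra.
Qed.
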